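(* Let \[ \mathfrak m=\left\{\begin{pmatrix} 0 & 0 & 0 & 0 & 0 & 0 & 0\\ u_1 & 0 & 0 & 0 & 0 & 0 & 0\\ u_2 & u_3 & 0 & 0 & 0 & 0 & 0\\ u_4 & 4u_2 & -4u_1 & 0 & 0 & 0 & 0\\ u_5 & -2u_4 & 0 & 4u_1 & 0 & 0 & 0\\ u_6 & 0 & 2u_4 & -4u_2 & -u_3 & 0 & 0\\ 0 & -u_6 & -u_5 & -u_4 & -u_2 & -u_1 & 0 \end{pmatrix} \;:\; u_1,\dots,u_6\in\mathbb R\right\}, \] a maximal nilpotent subalgebra of $\mathfrak g_{2(2)}$. Then $\mathfrak m$ does not contain a three-dimensional Lie subalgebra $\mathfrak b$ all of whose non-zero elements are matrices of rank two.
   Context: $\mathfrak g_{2(2)}$ is the Lie algebra of the split real form $\mathrm G_{2(2)}$ of $\mathrm G_2^{\mathbb C}$, realized (in a suitable Witt basis) as a subalgebra of $\mathfrak{so}_{4,3}$; $\mathfrak m$ is the set of strictly lower triangular matrices in this realization. *)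

From HB Require Import structures.
From mathcomp Require Import all_boot all_order all_algebra.
From mathcomp Require Export reals.
Set Implicit Arguments. Unset Strict Implicit. Unset Printing Implicit Defensive.
Import Order.TTheory GRing.Theory Num.Theory.
Local Open Scope ring_scope.

(* entries of the generic element of m, indexed from 0 *)
Definition mentry (R : realType) (u1 u2 u3 u4 u5 u6 : R) (i j : nat) : R :=
  match i, j with
  | 1, 0 => u1
  | 2, 0 => u2 | 2, 1 => u3
  | 3, 0 => u4 | 3, 1 => 4 * u2 | 3, 2 => - (4 * u1)
  | 4, 0 => u5 | 4, 1 => - (2 * u4) | 4, 3 => 4 * u1
  | 5, 0 => u6 | 5, 2 => 2 * u4 | 5, 3 => - (4 * u2) | 5, 4 => - u3
  | 6, 1 => - u6 | 6, 2 => - u5 | 6, 3 => - u4 | 6, 4 => - u2 | 6, 5 => - u1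
  | _, _ => 0
  end.

Definition mmat (R : realType) (u1 u2 u3 u4 u5 u6 : R) : 'M[R]_7 :=
  \matrix_(i < 7, j < 7) mentry u1 u2 u3 u4 u5 u6 i j.

Definition in_m (R : realType) (A : 'M[R]_7) : Prop :=
  exists u1 u2 u3 u4 u5 u6 : R, A = mmat u1 u2 u3 u4 u5 u6.

Definition lie_br (R : realType) (A B : 'M[R]_7) : 'M[R]_7 := A *m B - B *m A.

From HB Require Import structures.
From mathcomp Require Import all_boot all_order all_algebra.
From mathcomp Require Import reals.
From mathcomp Require Import ring lra.
Import GRing.Theory Num.Theory.
Local Open Scope ring_scope.

(** An element of m of rank at most two has u1 = 0 and satisfies
    4 u2^2 = u3 u4, u4 (u4^2 + 2 u2 u5) = 0 and u3 (2 u2 u4 + u3 u5) = 0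
    (vanishing of five 3x3 minors).  Let S be a 3-dimensional subspace of
    such matrices.  Its section W by the hyperplane u4 = 0 has dimension at
    least 2, and on W we get u2 = 0 and u3 u5 = 0; since u3 and u5 are linear
    forms, W is one of the planes <E3, E6>, <E5, E6>.  But if E3 (resp. E5)
    lies in S, comparing the equations at x and x + E3 (resp. x + E5) shows
    that u4 vanishes on S, so that S = W has dimension 2. *)

Lemma det_mx33 (R : comNzRingType) (a : nat -> nat -> R) :
  \det (\matrix_(i < 3, j < 3) a i j) =
    a 0 0 * (a 1 1 * a 2 2 - a 1 2 * a 2 1)
  - a 0 1 * (a 1 0 * a 2 2 - a 1 2 * a 2 0)
  + a 0 2 * (a 1 0 * a 2 1 - a 1 1 * a 2 0).
Proof.
rewrite (expand_det_row _ 0) !big_ord_recl big_ord0 /cofactor.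
rewrite !(expand_det_row _ 0) !big_ord_recl big_ord0 /cofactor !det_mx11 /=.
by rewrite !mxE !big_ord0 /=; ring.
Qed.

Lemma det_mxsub_eq0 {F : fieldType} {m n k} (A : 'M[F]_(m, n))
    (f : 'I_k -> 'I_m) (g : 'I_k -> 'I_n) :
  (\rank A < k)%N -> \det (mxsub f g A) = 0.
Proof.
move=> rkA; apply/eqP; apply: contraTT rkA => /negPf det_neq0; rewrite -leqNgt.
have <- : \rank (mxsub f g A) = k.
  by rewrite mxrank_unit ?unitmxE ?unitfE ?det_neq0.
have -> : mxsub f g A = rowsub f 1%:M *m A *m colsub g 1%:M.
  by rewrite -mulmxA mulmx_colsub mulmx1 -mxsub_mul mul1mx.
exact: leq_trans (mxrankM_maxl _ _) (mxrankM_maxr _ _).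
Qed.

Lemma det_minor_eq0 {F : fieldType} {m n k} (a : nat -> nat -> F) (r c : nat -> nat) :
    (\rank (\matrix_(i < m, j < n) a i j) < k)%N ->
    (forall i, i < k -> r i < m)%N -> (forall j, j < k -> c j < n)%N ->
  \det (\matrix_(i < k, j < k) a (r i) (c j)) = 0.
Proof.
move=> rkA r_lt c_lt.
rewrite -(det_mxsub_eq0 _ (fun i => Ordinal (r_lt i (ltn_ord i)))
                          (fun j => Ordinal (c_lt j (ltn_ord j))) rkA).
by congr (\det _); apply/matrixP => i j; rewrite !mxE.
Qed.

Lemma dimv_cap_lker_form {K : fieldType} {vT : vectType K} (f : 'Hom(vT, K^o))
    (U : {vspace vT}) :
  (\dim U <= (\dim (U :&: lker f)).+1)%N.
Proof.
rewrite -(limg_ker_dim f U) -addn1 leq_add2l.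
by apply: leq_trans (dimvS (subvf _)) _; rewrite dimvf.
Qed.

Lemma forms_mul_eq0 {K : idomainType} {V : zmodType} {U : {pred V}}
    {f g : {additive V -> K}} :
    {in U &, forall x y, x + y \in U} -> {in U, forall x, f x * g x = 0} ->
  {in U &, forall x y, f x * g y = 0}.
Proof.
move=> UD fg0 x y xU yU.
have cross0 : f x * g y + f y * g x = 0.
  transitivity (f (x + y) * g (x + y) - f x * g x - f y * g y).
    by rewrite !raddfD; ring.
  by rewrite !fg0 ?UD // !subr0.
have prod0 : (f x * g y) * (f y * g x) = 0.
  by transitivity ((f x * g x) * (f y * g y)); [ring | rewrite fg0 ?mul0r].
apply/eqP; rewrite -sqrf_eq0; apply/eqP.
transitivity (f x * g y * (f x * g y + f y * g x) - f x * g y * (f y * g x)).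
  by ring.
by rewrite cross0 prod0; ring.
Qed.

Section NilradicalG2.

Variable R : realType.

Lemma mmat_rank_le2 (u1 u2 u3 u4 u5 u6 : R) :
    (\rank (mmat u1 u2 u3 u4 u5 u6) <= 2)%N ->
  [/\ u1 = 0, 4 * u2 ^+ 2 = u3 * u4, u4 * (u4 ^+ 2 + 2 * u2 * u5) = 0
    & u3 * (2 * u2 * u4 + u3 * u5) = 0].
Proof.
move=> rk.
pose a r c i j := mentry u1 u2 u3 u4 u5 u6 (nth 0%N r i) (nth 0%N c j).
have minor (r c : seq nat) : all (gtn 7) r -> all (gtn 7) c ->
    \det (\matrix_(i < 3, j < 3) a r c i j) = 0.
  move=> r_lt c_lt.
  apply: (@det_minor_eq0 _ 7 7 3 (mentry u1 u2 u3 u4 u5 u6) _ _ rk) => i _.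
    by case: (ltnP i (size r)) => [/(all_nthP 0 r_lt)|/(nth_default 0)->].
  by case: (ltnP i (size c)) => [/(all_nthP 0 c_lt)|/(nth_default 0)->].
have := minor [:: 1; 3; 4]%N [:: 0; 2; 3]%N isT isT.
rewrite det_mx33 /a /= => m1.
have u1_0 : u1 = 0.
  have : u1 ^+ 3 = 0 by nra.
  by move/eqP; rewrite expf_eq0 => /eqP.
subst u1.
have := minor [:: 3; 5; 6]%N [:: 1; 3; 4]%N isT isT.
rewrite det_mx33 /a /= => m2.
have := minor [:: 2; 5; 6]%N [:: 1; 3; 4]%N isT isT.
rewrite det_mx33 /a /= => m3.
have := minor [:: 3; 4; 5]%N [:: 0; 1; 2]%N isT isT.
rewrite det_mx33 /a /= => m4.
have := minor [:: 2; 4; 5]%N [:: 0; 1; 4]%N isT isT.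
rewrite det_mx33 /a /= => m5.
have Q : 4 * u2 ^+ 2 = u3 * u4.
  have {}m2 : 4 * u2 * (4 * u2 ^+ 2 - u3 * u4) = 0 by rewrite -m2; ring.
  have {}m3 : u3 * (4 * u2 ^+ 2 - u3 * u4) = 0 by rewrite -m3; ring.
  apply/eqP; rewrite -subr_eq0 -sqrf_eq0; apply/eqP.
  transitivity (u2 * (4 * u2 * (4 * u2 ^+ 2 - u3 * u4))
                - u4 * (u3 * (4 * u2 ^+ 2 - u3 * u4))); first by ring.
  by rewrite m2 m3; ring.
by split => //; lra.
Qed.

Definition mxent (i j : nat) (A : 'M[R]_7) : R^o := A (inord i) (inord j).

Fact mxent_is_linear i j : linear (mxent i j).
Proof. by move=> a A B; rewrite /mxent !mxE. Qed.

HB.instance Definition _ i j :=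
  GRing.isLinear.Build R 'M[R]_7 R^o _ (mxent i j) (mxent_is_linear i j).

Definition mxent_form i j : 'Hom('M[R]_7, R^o) := linfun (mxent i j).

Lemma mem_lker_mxent i j A : (A \in lker (mxent_form i j)) = (mxent i j A == 0).
Proof. by rewrite memv_ker lfunE. Qed.

Lemma mxent_mmat (u1 u2 u3 u4 u5 u6 : R) i j : (i < 7)%N -> (j < 7)%N ->
  mxent i j (mmat u1 u2 u3 u4 u5 u6) = mentry u1 u2 u3 u4 u5 u6 i j.
Proof. by move=> i_lt j_lt; rewrite /mxent mxE !inordK. Qed.

Local Notation u1 := (mxent 1 0).
Local Notation u2 := (mxent 2 0).
Local Notation u3 := (mxent 2 1).
Local Notation u4 := (mxent 3 0).
Local Notation u5 := (mxent 4 0).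
Local Notation u6 := (mxent 5 0).

Lemma in_mE {A} : in_m A -> A = mmat (u1 A) (u2 A) (u3 A) (u4 A) (u5 A) (u6 A).
Proof. by case=> [x1 [x2 [x3 [x4 [x5 [x6 ->]]]]]]; rewrite !mxent_mmat. Qed.

Definition E3 : 'M[R]_7 := mmat 0 0 1 0 0 0.
Definition E5 : 'M[R]_7 := mmat 0 0 0 0 1 0.
Definition E6 : 'M[R]_7 := mmat 0 0 0 0 0 1.

Lemma mmat_E356 (a b c : R) : mmat 0 0 a 0 b c = a *: E3 + b *: E5 + c *: E6.
Proof.
apply/matrixP => i j; rewrite !mxE.
by case: i => [[|[|[|[|[|[|[|i]]]]]]] ?]; case: j => [[|[|[|[|[|[|[|j]]]]]]] ?] //=; ring.
Qed.

Section RankTwoSubspace.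

Variable S : {vspace 'M[R]_7}.
Hypothesis S_m : forall A, A \in S -> in_m A.
Hypothesis S_rank : forall A, A \in S -> (\rank A <= 2)%N.

Lemma S_eqns {A} : A \in S ->
  [/\ u1 A = 0, 4 * u2 A ^+ 2 = u3 A * u4 A,
      u4 A * (u4 A ^+ 2 + 2 * u2 A * u5 A) = 0
    & u3 A * (2 * u2 A * u4 A + u3 A * u5 A) = 0].
Proof.
by move=> AS; move: (S_rank _ AS); rewrite {1}(in_mE (S_m _ AS)); apply: mmat_rank_le2.
Qed.

Lemma E3_in_S_u4_eq0 : E3 \in S -> {in S, forall A, u4 A = 0}.
Proof.
move=> E3S A AS; have [_ Q _ _] := S_eqns AS.
have [_ Q3 _ _] := S_eqns (memvD AS E3S).
by move: Q3; rewrite !raddfD /= !mxent_mmat //=; nra.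
Qed.

Lemma E5_in_S_u4_eq0 : E5 \in S -> {in S, forall A, u4 A = 0}.
Proof.
move=> E5S A AS; have [_ _ C _] := S_eqns AS.
have [_ _ C5 _] := S_eqns (memvD AS E5S).
move: C5; rewrite !raddfD /= !mxent_mmat //= !addr0 => C5.
have u24 : u2 A * u4 A = 0 by nra.
have : u4 A ^+ 3 = 0.
  by transitivity (u4 A * (u4 A ^+ 2 + 2 * u2 A * u5 A) - 2 * u5 A * (u2 A * u4 A));
    [ring | rewrite C u24; ring].
by move/eqP; rewrite expf_eq0 => /eqP.
Qed.

Let W := (S :&: lker (mxent_form 3 0))%VS.

Lemma W_eqns {A} : A \in W -> [/\ A \in S, u4 A = 0, u2 A = 0 & u3 A * u5 A = 0].
Proof.
case/memv_capP => AS; rewrite mem_lker_mxent => /eqP A4.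
have [_ Q _ B] := S_eqns AS.
have A2 : u2 A = 0.
  by move: Q; rewrite A4 mulr0 => /eqP; rewrite mulf_eq0 sqrf_eq0 pnatr_eq0 => /eqP.
split => //; move: B; rewrite A2 A4 !(mul0r, mulr0, add0r) => /eqP.
by rewrite mulf_eq0 => /orP[/eqP->|/eqP//]; rewrite mul0r.
Qed.

Lemma W_E356 {A} : A \in W -> A = u3 A *: E3 + u5 A *: E5 + u6 A *: E6.
Proof.
move=> AW; have [AS A4 A2 _] := W_eqns AW; have [A1 _ _ _] := S_eqns AS.
by rewrite {1}(in_mE (S_m _ AS)) A1 A2 A4 mmat_E356.
Qed.

Lemma W_sub_plane : (W <= <<[:: E3; E6]>>)%VS \/ (W <= <<[:: E5; E6]>>)%VS.
Proof.
have memv_span2 a b (x y : 'M[R]_7) : a *: x + b *: y \in <<[:: x; y]>>%VS.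
  by rewrite memvD ?memvZ ?memv_span ?inE ?eqxx ?orbT.
have [W_u3|/subvPn[A AW]] := boolP (W <= lker (mxent_form 2 1))%VS.
  right; apply/subvP => B BW.
  move/subvP/(_ B BW): W_u3; rewrite mem_lker_mxent => /eqP B3.
  by rewrite (W_E356 BW) B3 scale0r add0r memv_span2.
rewrite mem_lker_mxent => A3; left; apply/subvP => B BW.
have W_D : {in W &, forall x y, x + y \in W} by move=> x y; apply: memvD.
have W_35 : {in W, forall x, u3 x * u5 x = 0} by move=> x /W_eqns[].
have /eqP := forms_mul_eq0 W_D W_35 _ _ AW BW.
rewrite mulf_eq0 (negPf A3) => /eqP B5.
by rewrite (W_E356 BW) B5 scale0r addr0 memv_span2.
Qed.

Lemma dim_rank_le2_subspace : (\dim S <= 2)%N.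
Proof.
have dimSW : (\dim S <= (\dim W).+1)%N := dimv_cap_lker_form (mxent_form 3 0) S.
have plane_dim E : (E \in S -> {in S, forall A, u4 A = 0}) ->
    (W <= <<[:: E; E6]>>)%VS -> (\dim S <= 2)%N.
  move=> E_u4 WV; have dimV := dim_span [:: E; E6].
  have [dimW|dimW] := leqP (\dim W) 1; first exact: leq_trans dimSW _.
  have W_V : W = <<[:: E; E6]>>%VS.
    by apply/eqP; rewrite eqEdim WV (leq_trans dimV dimW).
  have /memv_capP[ES _] : E \in W by rewrite W_V memv_span ?mem_head.
  have SW : (S <= W)%VS.
    by apply/subvP => A AS; rewrite /W memv_cap AS mem_lker_mxent; apply/eqP; apply: E_u4.
  by rewrite (leq_trans (dimvS SW)) // W_V.
by case: W_sub_plane; [apply: plane_dim E3_in_S_u4_eq0 | apply: plane_dim E5_in_S_u4_eq0].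
Qed.

End RankTwoSubspace.

End NilradicalG2.

Theorem lemma3p7 (R : realType) :
  ~ exists b : {vspace 'M[R]_7},
      [/\ (\dim b = 3)%N,
          (forall x, x \in b -> in_m x),
          (forall x y, x \in b -> y \in b -> lie_br x y \in b)
        & (forall x, x \in b -> x != 0 -> \rank x = 2%N)].
Proof.
case=> b [dim_b b_m _ b_rank2].
have b_rank x : x \in b -> (\rank x <= 2)%N.
  by move=> xb; have [->|/(b_rank2 x xb)->] := eqVneq x 0; rewrite ?mxrank0.
by have := dim_rank_le2_subspace _ _ b_m b_rank; rewrite dim_b.
Qed.
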